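(* Let $K$ be a field, $V$ a finite-dimensional $K$-vector space, $W$ a subspace and $U$ a complement of $W$, so $V=W\oplus U$. Let $\operatorname{CWAff}_W(V)$ be the group of all $W$-coset-wise $K$-affine functions $V\to V$ that are permutations of $V$. Let $\operatorname{Aff}(W)\wr_{\mathrm{imp}}\operatorname{Sym}(U)$ be the permutation group on $W\times U$ consisting of all maps $(w,u)\mapsto(a_u(w),\sigma(u))$ with $\sigma\in\operatorname{Sym}(U)$ and $a_u\in\operatorname{Aff}(W)$ for each $u\in U$. Let $\iota:V\to W\times U$, $w+u\mapsto(w,u)$ ($w\in W,u\in U$). Then $\sigma\mapsto\iota\circ\sigma\circ\iota^{-1}$ maps $\operatorname{CWAff}_W(V)$ bijectively onto $\operatorname{Aff}(W)\wr_{\mathrm{imp}}\operatorname{Sym}(U)$ (i.e., $\iota$ is an isomorphism of permutation groups). Moreover, for every family $(\alpha_u)_{u\in U}$ of automorphisms of $W$ and every family $(v_u)_{u\in U}$ of vectors of $V$, written $v_u=\omega_u+\nu_u$ with $\omega_u\in W$, $\nu_u\in U$, such that the map $f:V\to V$, $w+u\mapsto \alpha_u(w)+u+v_u$ ($w\in W,u\in U$) is a permutation, the map $g:U\to U$, $u\mapsto u+\nu_u$, is a permutation of $U$ and $\iota\circ f\circ\iota^{-1}$ is the permutation $(w,u)\mapsto(\alpha_u(w)+\omega_u,\ g(u))$ of $W\times U$.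
   Context: A function $f:V\to V$ is $W$-coset-wise $K$-affine if for each coset $C$ of $W$ in $V$ there are $v_C\in V$ and a $K$-endomorphism $\varphi_C$ of $V$ with $\varphi_C(W)\subseteq W$ such that $f(x)=\varphi_C(x)+v_C$ for all $x\in C$. $\operatorname{Aff}(W)$ denotes the group of affine permutations of $W$, i.e., maps $w\mapsto\alpha(w)+\omega$ with $\alpha$ a $K$-automorphism of $W$ and $\omega\in W$. *)

From HB Require Import structures.
From mathcomp Require Import all_boot all_order all_algebra.
Set Implicit Arguments. Unset Strict Implicit. Unset Printing Implicit Defensive.
Import GRing.Theory.
Local Open Scope ring_scope.

Section Defs.
Variables (K : fieldType) (vT : vectType K).

Definition coset_wise_affine (W : {vspace vT}) (f : vT -> vT) : Prop :=
  forall x0 : vT, exists phi : 'End(vT), (phi @: W <= W)%VS /\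
    exists v : vT, forall x, x - x0 \in W -> f x = phi x + v.

Definition is_affine_perm (W : {vspace vT}) (a : subvs_of W -> subvs_of W) : Prop :=
  exists alpha : {linear subvs_of W -> subvs_of W}, bijective alpha /\
    exists omega : subvs_of W, forall w, a w = alpha w + omega.

Definition in_wreath (W U : {vspace vT})
    (h : subvs_of W * subvs_of U -> subvs_of W * subvs_of U) : Prop :=
  exists sigma : subvs_of U -> subvs_of U, bijective sigma /\
  exists a : subvs_of U -> subvs_of W -> subvs_of W,
    (forall u, is_affine_perm (a u)) /\
    forall w u, h (w, u) = (a u w, sigma u).

Definition iota_dec (W U : {vspace vT}) (x : vT) : subvs_of W * subvs_of U :=
  (vsproj W (daddv_pi W U x), vsproj U (daddv_pi U W x)).

Definition iota_inv (W U : {vspace vT}) (p : subvs_of W * subvs_of U) : vT :=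
  vsval p.1 + vsval p.2.

Definition iota_conj (W U : {vspace vT}) (f : vT -> vT) :=
  fun p : subvs_of W * subvs_of U => iota_dec W U (f (iota_inv p)).

End Defs.

Arguments coset_wise_affine {K vT} W f.
Arguments is_affine_perm {K vT W} a.
Arguments in_wreath {K vT W U} h.
Arguments iota_dec {K vT} W U x.
Arguments iota_inv {K vT W U} p.
Arguments iota_conj {K vT} W U f p.

From HB Require Import structures.
From mathcomp Require Import all_boot all_order all_algebra.
From Stdlib Require Import ClassicalEpsilon.

Set Implicit Arguments.
Unset Strict Implicit.
Unset Printing Implicit Defensive.
Import GRing.Theory.
Local Open Scope ring_scope.

(* Through [iota], the cosets of [W] are the fibres [W * {u}].  A coset-wise
   affine map acts on the fibre over [u] as [w |-> alpha_u w + omega_u] and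
   sends it into the fibre over [sigma u].  If the map is injective, every
   [alpha_u] is an injective endomorphism of the finite-dimensional space [W],
   hence an automorphism; and once all fibre maps are bijective, the whole map
   is bijective exactly when [sigma] is.  Conversely every such fibrewise map
   pulls back along [iota] to a coset-wise affine permutation of [V]. *)

Lemma inj_surj_bij (A B : Type) (f : A -> B) :
  injective f -> (forall y, exists x, f x = y) -> bijective f.
Proof.
move=> f_inj f_surj.
pose g y := proj1_sig (constructive_indefinite_description _ (f_surj y)).
have gK : cancel g f.
  by move=> y; rewrite /g; case: constructive_indefinite_description.
by exists g => // x; apply: f_inj; rewrite gK.
Qed.

Definition fibre_map {A B : Type} (a : B -> A -> A) (s : B -> B) (p : A * B) :=
  (a p.2 p.1, s p.2).

Lemma fibre_map_bijE (A B : Type) (a : B -> A -> A) (s : B -> B) (x0 : A) :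
  (forall b, bijective (a b)) -> bijective (fibre_map a s) <-> bijective s.
Proof.
move=> a_bij; split.
- case=> h' hK h'K; exists (fun b => (h' (x0, b)).2) => [b | b].
    have [a' _ a'K] := a_bij b.
    have -> : (x0, s b) = fibre_map a s (a' x0, b) by rewrite /fibre_map /= a'K.
    by rewrite hK.
  by rewrite -[s _]/(fibre_map a s (h' (x0, b))).2 h'K.
- move=> s_bij; apply: inj_surj_bij => [[x1 b1] [x2 b2] [] | [y b]].
    by move=> + /(bij_inj s_bij) eb; rewrite eb => /(bij_inj (a_bij b2)) ->.
  have [s' sK s'K] := s_bij; have [a' _ a'K] := a_bij (s' b).
  by exists (a' y, s' b); rewrite /fibre_map /= a'K s'K.
Qed.

Lemma lfun_inj_bij (K : fieldType) (vT : vectType K) (L : 'End(vT)) :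
  injective L -> bijective L.
Proof. by move/lker0P=> L0; exists (L^-1)%VF; [exact: lker0_lfunK | exact: lker0_lfunVK]. Qed.

Lemma affine_perm_bij (K : fieldType) (vT : vectType K) (W : {vspace vT})
    (a : subvs_of W -> subvs_of W) :
  is_affine_perm a -> bijective a.
Proof.
case=> alpha [[alpha' alphaK alpha'K] [omega aE]].
exists (fun w => alpha' (w - omega)) => w; rewrite ?aE.
  by rewrite addrK alphaK.
by rewrite alpha'K subrK.
Qed.

Lemma daddv_pi_eq0 (K : fieldType) (vT : vectType K) (U V : {vspace vT}) v :
  (U :&: V = 0)%VS -> v \in V -> daddv_pi U V v = 0.
Proof.
move=> dUV Vv; have := daddv_pi_add dUV (subvP (addvSr U V) v Vv).
by rewrite [daddv_pi V U v]daddv_pi_id 1?capvC // => /(canRL (addrK v)); rewrite subrr.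
Qed.

Section Decomposition.

Variables (K : fieldType) (vT : vectType K) (W U : {vspace vT}).
Hypotheses (hcap : (W :&: U = 0)%VS) (hsum : (W + U = fullv)%VS).

Local Notation iota := (iota_dec W U).

Lemma iota_decD x y :
  iota (x + y) = ((iota x).1 + (iota y).1, (iota x).2 + (iota y).2).
Proof. by rewrite /iota_dec !linearD. Qed.

Lemma iota_decW x : x \in W -> iota x = (vsproj W x, 0).
Proof.
move=> Wx; rewrite /iota_dec daddv_pi_id // daddv_pi_eq0 1?capvC //.
by rewrite linear0.
Qed.

Lemma iota_decU y : y \in U -> iota y = (0, vsproj U y).
Proof.
move=> Uy; rewrite /iota_dec daddv_pi_eq0 // daddv_pi_id 1?capvC //.
by rewrite linear0.
Qed.

Lemma iota_invK : cancel iota iota_inv.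
Proof.
move=> x; rewrite /iota_inv /iota_dec /= !vsprojK ?memv_pi //.
by rewrite daddv_pi_add // hsum memvf.
Qed.

Lemma iota_decK : cancel iota_inv iota.
Proof.
case=> w u; rewrite /iota_inv iota_decD iota_decW ?iota_decU ?subvsP //=.
by rewrite !vsvalK addr0 add0r.
Qed.

Lemma iota_dec_bij : bijective iota.
Proof. exact: Bijective iota_invK iota_decK. Qed.

Lemma iota_inv_bij : bijective (@iota_inv _ _ W U).
Proof. exact: Bijective iota_decK iota_invK. Qed.

Lemma iota_conj_bij f : bijective f -> bijective (iota_conj W U f).
Proof. by move=> f_bij; apply: bij_comp (bij_comp iota_dec_bij f_bij) iota_inv_bij. Qed.

Lemma iota_conj_inj f1 f2 : iota_conj W U f1 =1 iota_conj W U f2 -> f1 =1 f2.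
Proof.
move=> e x; have /(can_inj iota_invK) := e (iota x).
by rewrite iota_invK.
Qed.

Lemma iota_dec_coset x x0 : x - x0 \in W -> (iota x).2 = (iota x0).2.
Proof. by move=> Wx; rewrite -(subrK x0 x) iota_decD iota_decW //= add0r. Qed.

Lemma iota_conj_cwaff_fibre f : coset_wise_affine W f -> forall u,
  exists (alpha : 'End(subvs_of W)) (omega : subvs_of W) (nu : subvs_of U),
    forall w, iota_conj W U f (w, u) = (alpha w + omega, nu).
Proof.
move=> f_cwa u; have [phi [phiW [v fE]]] := f_cwa (vsval u).
have phiWW (w : subvs_of W) : phi (vsval w) \in W.
  by apply: (subvP phiW); apply: memv_img; exact: subvsP.
exists (linfun (vsproj W \o phi \o vsval)), (iota (phi (vsval u) + v)).1.
exists (iota (phi (vsval u) + v)).2 => w.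
rewrite /iota_conj /iota_inv /= fE ?addrK ?subvsP // linearD -addrA iota_decD.
by rewrite iota_decW //= lfunE /= add0r.
Qed.

Lemma cwaff_conj_in_wreath f :
  bijective f -> coset_wise_affine W f -> in_wreath (iota_conj W U f).
Proof.
move=> f_bij f_cwa; set h := iota_conj W U f.
have h_inj := bij_inj (iota_conj_bij f_bij).
pose sigma u := (h (0, u)).2; pose a u w := (h (w, u)).1.
have hE w u : h (w, u) = (a u w, sigma u).
  have [alpha [omega [nu hu]]] := iota_conj_cwaff_fibre f_cwa u.
  by rewrite /a /sigma /h !hu.
have a_aff u : is_affine_perm (a u).
  have [alpha [omega [nu hu]]] := iota_conj_cwaff_fibre f_cwa u.
  have aE w : a u w = alpha w + omega by rewrite /a /h hu.
  exists (fun_of_lfun alpha : {linear _ -> _}); split; last by exists omega.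
  apply: lfun_inj_bij => w1 w2 e.
  have: h (w1, u) = h (w2, u) by rewrite !hE !aE e.
  by move/h_inj=> [].
have h_fibre : h =1 fibre_map a sigma by case=> w u; rewrite hE.
exists sigma; split; last by exists a.
apply: (fibre_map_bijE sigma 0 (fun u => affine_perm_bij (a_aff u))).1.
exact: (eq_bij (iota_conj_bij f_bij) h_fibre).
Qed.

Lemma in_wreath_conj_cwaff h : in_wreath h -> exists f : vT -> vT,
  [/\ bijective f, coset_wise_affine W f & iota_conj W U f =1 h].
Proof.
case=> sigma [sigma_bij [a [a_aff hE]]].
have h_bij : bijective h.
  have a_bij u := affine_perm_bij (a_aff u).
  apply: (eq_bij ((fibre_map_bijE sigma 0 a_bij).2 sigma_bij)).
  by case=> w u; rewrite hE.
exists (iota_inv \o h \o iota); split.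
- exact: bij_comp (bij_comp iota_inv_bij h_bij) iota_dec_bij.
- move=> x0; set u0 := (iota x0).2.
  have [alpha [_ [omega aE]]] := a_aff u0.
  exists (linfun (vsval \o alpha \o vsproj W \o daddv_pi W U)); split.
    by apply/subvP=> _ /memv_imgP[y _ ->]; rewrite lfunE subvsP.
  exists (vsval omega + vsval (sigma u0)) => x /iota_dec_coset ex.
  by rewrite /= [iota x]surjective_pairing ex hE aE lfunE /iota_inv /= addrA.
- by move=> p; rewrite /iota_conj /= !iota_decK.
Qed.

Lemma iota_conj_affine_fibres (f : vT -> vT)
    (alpha : subvs_of U -> subvs_of W -> subvs_of W) (v : subvs_of U -> vT) :
  (forall w u, f (vsval w + vsval u) = vsval (alpha u w) + vsval u + v u) ->
  forall w u, iota_conj W U f (w, u) =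
              (alpha u w + (iota (v u)).1, u + (iota (v u)).2).
Proof.
move=> fE w u; rewrite /iota_conj /iota_inv fE !iota_decD.
by rewrite (iota_decW (subvsP _)) (iota_decU (subvsP _)) /= !vsvalK addr0 add0r.
Qed.

End Decomposition.

Theorem theorem4p3 (K : fieldType) (vT : vectType K) (W U : {vspace vT})
    (hcap : (W :&: U = 0)%VS) (hsum : (W + U = fullv)%VS) :
  (* iota_dec o - o iota_dec^{-1} maps CWAff_W(V) bijectively onto Aff(W) wr_imp Sym(U) *)
  ((forall f : vT -> vT, bijective f -> coset_wise_affine W f ->
      in_wreath (iota_conj W U f)) /\
   (forall f1 f2 : vT -> vT,
      bijective f1 -> coset_wise_affine W f1 ->
      bijective f2 -> coset_wise_affine W f2 ->
      iota_conj W U f1 =1 iota_conj W U f2 -> f1 =1 f2) /\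
   (forall h, in_wreath h -> exists f : vT -> vT,
      [/\ bijective f, coset_wise_affine W f & iota_conj W U f =1 h])) /\
  (* explicit description of the image of a coset-wise affine permutation *)
  (forall (alpha : subvs_of U -> {linear subvs_of W -> subvs_of W})
          (v : subvs_of U -> vT),
     (forall u, bijective (alpha u)) ->
     let f := fun x : vT =>
       vsval (alpha (iota_dec W U x).2 (iota_dec W U x).1) + vsval (iota_dec W U x).2
       + v (iota_dec W U x).2 in
     let omega := fun u => (iota_dec W U (v u)).1 in
     let nu := fun u => (iota_dec W U (v u)).2 in
     let g := fun u : subvs_of U => u + nu u in
     bijective f ->
     bijective g /\
     forall w u, iota_conj W U f (w, u) = (alpha u w + omega u, g u)).
Proof.
split.
  split; first exact: cwaff_conj_in_wreath.
  split; last exact: in_wreath_conj_cwaff.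
  by move=> f1 f2 _ _ _ _; apply: iota_conj_inj.
move=> alpha v alpha_bij f omega nu g f_bij.
have fE : forall w u, iota_conj W U f (w, u) = (alpha u w + omega u, g u).
  apply: (iota_conj_affine_fibres hcap (alpha := fun u w => alpha u w)) => w u.
  by rewrite /f -[vsval w + vsval u]/(iota_inv (w, u)) iota_decK.
split=> //.
have fibre_bij u : bijective (fun w => alpha u w + omega u).
  by apply: affine_perm_bij; exists (alpha u); split=> //; exists (omega u).
apply: (fibre_map_bijE g 0 fibre_bij).1.
by apply: (eq_bij (iota_conj_bij hcap hsum f_bij)); case=> w u; rewrite fE.
Qed.
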